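(* For each GES $\gamma=(E,\#,\to,\lhd)$ there is an RCES $\rho$ (over the same event set $E$) such that $\gamma$ and $\rho$ are transition equivalent.
   Context: GES: $\gamma=(E,\#,\to,\lhd)$ with $\#\subseteq E^2$ irreflexive symmetric, $\to\subseteq E^2$ a binary relation (initial causality), $\lhd\subseteq E^3$ where $(c,m,t)\in\lhd$ means ''$m$ adds $c$ as a cause of $t$'', requiring $\neg(c\to t)$. $\mathrm{ic}(e)=\{e'\mid e'\to e\}$, $\mathrm{ac}(H,e)=\{e'\mid\exists a\in H.(e',a,e)\in\lhd\}$. For $X,Y\subseteq E$, $X\to_g Y$ iff $X\subseteq Y$, $\neg(e\#e')$ for all $e,e'\in Y$, $\mathrm{ic}(e)\cup\mathrm{ac}(X,e)\subseteq X$ for all $e\in Y\setminus X$, and for all $t,m\in Y\setminus X$ and $c\in E$, $(c,m,t)\in\lhd$ implies $c\in X$. RCES: a pair $\rho=(E,\vdash)$ with $\vdash\subseteq 2^E\times 2^E$; for $X,Y\subseteq E$, $X\to_{rc}Y$ iff $X\subseteq Y$ and for every $Z\subseteq Y$ there is $W\subseteq X$ with $W\vdash Z$. For an event structure $\mu$ with transition relation $\to_\mu$ on subsets of its events, $\mathcal{C}(\mu)$ is the set of sets reachable from $\emptyset$ by finitely many $\to_\mu$-steps. Two such structures $\mu,\mu'$ are transition equivalent iff $\mathcal{C}(\mu)=\mathcal{C}(\mu')$ and for all $X,Y\in\mathcal{C}(\mu)$: $X\to_\mu Y$ iff $X\to_{\mu'}Y$. *)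

From Stdlib Require Import Classical.

Definition subset {E : Type} (X Y : E -> Prop) : Prop := forall e, X e -> Y e.

Record GES (E : Type) := mkGES {
  ges_conf : E -> E -> Prop;
  ges_ic   : E -> E -> Prop;            (* initial causality ->, ic e' e means e' -> e *)
  ges_add  : E -> E -> E -> Prop;       (* (c,m,t) in <| : m adds c as a cause of t *)
  ges_conf_irrefl : forall e, ~ ges_conf e e;
  ges_conf_sym : forall e e', ges_conf e e' -> ges_conf e' e;
  ges_add_not_ic : forall c m t, ges_add c m t -> ~ ges_ic c t
}.
Arguments ges_conf {E}. Arguments ges_ic {E}. Arguments ges_add {E}.

Definition ic {E} (g : GES E) (e : E) : E -> Prop := fun e' => ges_ic g e' e.
Definition ac {E} (g : GES E) (H : E -> Prop) (e : E) : E -> Prop :=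
  fun e' => exists a, H a /\ ges_add g e' a e.

Definition ges_trans {E} (g : GES E) (X Y : E -> Prop) : Prop :=
  subset X Y /\
  (forall e e', Y e -> Y e' -> ~ ges_conf g e e') /\
  (forall e, Y e -> ~ X e -> subset (fun x => ic g e x \/ ac g X e x) X) /\
  (forall t m c, Y t -> ~ X t -> Y m -> ~ X m -> ges_add g c m t -> X c).

Record RCES (E : Type) := mkRCES { rces_en : (E -> Prop) -> (E -> Prop) -> Prop }.
Arguments rces_en {E}.

Definition rces_trans {E} (r : RCES E) (X Y : E -> Prop) : Prop :=
  subset X Y /\
  forall Z, subset Z Y -> exists W, subset W X /\ rces_en r W Z.

Inductive reachable {E} (step : (E -> Prop) -> (E -> Prop) -> Prop)
  : (E -> Prop) -> Prop :=
| reach_empty : reachable step (fun _ => False)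
| reach_step : forall X Y, reachable step X -> step X Y -> reachable step Y.

Definition transition_equivalent {E}
  (s1 s2 : (E -> Prop) -> (E -> Prop) -> Prop) : Prop :=
  (forall X, reachable s1 X <-> reachable s2 X) /\
  (forall X Y, reachable s1 X -> reachable s1 Y -> (s1 X Y <-> s2 X Y)).

(** A transition X ->_g Y of a GES only involves constraints on single events
    of Y and on pairs of events of Y. The RCES enabling W |- Z is therefore
    chosen so that, probed with the singletons and pairs Z of Y and with
    W = X, it expresses exactly those constraints: Z is conflict-free, and
    every event of Z outside W has its initial causes in W, as well as every
    cause added to it by a modifier in Z. *)
From Stdlib Require Import Classical.

Lemma reachable_eq_step {E} (s1 s2 : (E -> Prop) -> (E -> Prop) -> Prop) :
  (forall X Y, s1 X Y <-> s2 X Y) ->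
  forall X, reachable s1 X -> reachable s2 X.
Proof.
  intros Hs X HX; induction HX as [|X Y _ IH HXY].
  - constructor.
  - apply reach_step with X; [exact IH | apply Hs; exact HXY].
Qed.

Lemma transition_equivalent_eq_step {E}
    (s1 s2 : (E -> Prop) -> (E -> Prop) -> Prop) :
  (forall X Y, s1 X Y <-> s2 X Y) -> transition_equivalent s1 s2.
Proof.
  intros Hs; split.
  - intros X; split; apply reachable_eq_step; [exact Hs|].
    intros X' Y'; symmetry; apply Hs.
  - intros X Y _ _; apply Hs.
Qed.

Definition ges_enabling {E} (g : GES E) (W Z : E -> Prop) : Prop :=
  (forall e e', Z e -> Z e' -> ~ ges_conf g e e') /\
  (forall e, Z e -> W e \/
     (subset (ic g e) W /\ forall m c, Z m -> ges_add g c m e -> W c)).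

Definition ges_rces {E} (g : GES E) : RCES E := mkRCES E (ges_enabling g).

Lemma ges_trans_rces_trans {E} (g : GES E) X Y :
  ges_trans g X Y -> rces_trans (ges_rces g) X Y.
Proof.
  intros [HXY [Hconf [Hcause Hadd]]]; split; [exact HXY|].
  intros Z HZY; exists X; split; [intros x Hx; exact Hx|]; split.
  - intros e e' He He'; apply Hconf; auto.
  - intros e He; destruct (classic (X e)) as [HXe | HXe]; [left; exact HXe|].
    right; split.
    + intros x Hx; apply (Hcause e (HZY e He) HXe); left; exact Hx.
    + intros m c Hm Hmce; destruct (classic (X m)) as [HXm | HXm].
      * apply (Hcause e (HZY e He) HXe); right; exists m; auto.
      * exact (Hadd e m c (HZY e He) HXe (HZY m Hm) HXm Hmce).
Qed.

Lemma rces_trans_ges_trans {E} (g : GES E) X Y :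
  rces_trans (ges_rces g) X Y -> ges_trans g X Y.
Proof.
  intros [HXY Hen].
  assert (Hpair : forall a b, Y a -> Y b -> exists W, subset W X /\
            ges_enabling g W (fun x => x = a \/ x = b)).
  { intros a b Ha Hb; apply Hen; intros x [-> | ->]; assumption. }
  split; [exact HXY|]; split; [|split].
  - intros e e' He He'; destruct (Hpair e e' He He') as [W [_ [Hconf _]]].
    apply Hconf; auto.
  - intros e He HXe x [Hic | [m [HXm Hmxe]]].
    + destruct (Hpair e e He He) as [W [HWX [_ Hcause]]].
      destruct (Hcause e (or_introl eq_refl)) as [HWe | [Hic_W _]].
      * contradiction (HXe (HWX e HWe)).
      * exact (HWX x (Hic_W x Hic)).
    + destruct (Hpair e m He (HXY m HXm)) as [W [HWX [_ Hcause]]].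
      destruct (Hcause e (or_introl eq_refl)) as [HWe | [_ Hadd_W]].
      * contradiction (HXe (HWX e HWe)).
      * exact (HWX x (Hadd_W m x (or_intror eq_refl) Hmxe)).
  - intros t m c Ht HXt Hm _ Hmct.
    destruct (Hpair t m Ht Hm) as [W [HWX [_ Hcause]]].
    destruct (Hcause t (or_introl eq_refl)) as [HWt | [_ Hadd_W]].
    + contradiction (HXt (HWX t HWt)).
    + exact (HWX c (Hadd_W m c (or_intror eq_refl) Hmct)).
Qed.

Theorem lemma14 (E : Type) (g : GES E) :
  exists r : RCES E, transition_equivalent (ges_trans g) (rces_trans r).
Proof.
  exists (ges_rces g); apply transition_equivalent_eq_step; intros X Y; split.
  - apply ges_trans_rces_trans.
  - apply rces_trans_ges_trans.
Qed.
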